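(* Let $\epsilon\in(0,1)$, $d\ge1$, and let $f$ be the binary-tree function of depth $d$ on $n=2^{d+1}-2$ variables, with unit costs and $p_i=\frac{1+\epsilon}{2}$ for all $i$. Then $$\mathsf{OPT}_{\mathcal A}(f,c,p)\le 2\sum_{i=0}^{d}(1+\epsilon)^i.$$
   Context: Stochastic Boolean Function Evaluation setup: the input $x\in\{0,1\}^n$ has independent coordinates with $\Pr(x_i=1)=p_i$; testing $x_i$ costs $c_i$ (here $c_i=1$). A strategy tests variables sequentially until $f(x)$ is determined (i.e. $f(x')=f(x)$ for all $x'$ agreeing with $x$ on tested coordinates); an adaptive strategy may choose each next test based on previous outcomes. $\mathsf{OPT}_{\mathcal A}(f,c,p)$ is the minimum expected total test cost over adaptive strategies. Binary-tree function of depth $d$: in the complete binary tree of depth $d$ (root at depth $0$, $2^d$ leaves), the $n=2^{d+1}-2$ edges are numbered $1,\dots,n$ and variable $x_i$ is associated with edge $i$; a leaf is alive if $x_i=1$ for every edge on its root-to-leaf path, and $f(x)=1$ iff some leaf is alive. *)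

From HB Require Import structures.
From mathcomp Require Import all_boot all_order all_algebra.
From mathcomp Require Import classical_sets reals.
Set Implicit Arguments. Unset Strict Implicit. Unset Printing Implicit Defensive.
Import Order.TTheory GRing.Theory Num.Theory.
Local Open Scope classical_set_scope.
Local Open Scope ring_scope.

Definition input (n : nat) := {ffun 'I_n -> bool}.

Inductive strategy (n : nat) : Type :=
| Stop : strategy n
| Test : 'I_n -> strategy n -> strategy n -> strategy n.
Arguments Stop {n}.

Fixpoint tested (n : nat) (T : strategy n) (x : input n) : seq 'I_n :=
  match T with
  | Stop => [::]
  | Test i T0 T1 => i :: tested (if x i then T1 else T0) x
  end.

Definition determined (n : nat) (f : input n -> bool) (x : input n)
  (S : seq 'I_n) : Prop :=
  forall y : input n, (forall i, i \in S -> y i = x i) -> f y = f x.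

Definition valid_strategy (n : nat) (f : input n -> bool) (T : strategy n) :=
  forall x : input n, determined f x (tested T x).

Definition prob_input {R : realType} (n : nat) (p : 'I_n -> R) (x : input n) : R :=
  \prod_(i < n) (if x i then p i else 1 - p i).

Definition expected_cost {R : realType} (n : nat) (c p : 'I_n -> R)
  (T : strategy n) : R :=
  \sum_(x : input n) prob_input p x * \sum_(i <- tested T x) c i.

Definition OPT_A {R : realType} (n : nat) (f : input n -> bool)
  (c p : 'I_n -> R) : R :=
  inf [set r : R | exists2 T : strategy n, valid_strategy f T &
                                           r = expected_cost c p T].

Definition bt_n (d : nat) : nat := (2 ^ d.+1 - 2)%N.

(** Nodes of the complete binary tree are numbered in heap order 1..2^(d+1)-1
    (root 1, children of v are 2v and 2v+1); the edge entering node v >= 2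
    has (0-based) index v - 2.  Leaves are nodes 2^d + l, l < 2^d.  The
    ancestor at depth j of leaf l is (2^d + l) / 2^(d-j). *)
Definition bt_edge (d : nat) (l j : nat) : nat :=
  ((2 ^ d + l) %/ 2 ^ (d - j) - 2)%N.

(** Value of x at index k (false if out of range; never happens here). *)
Definition xat (n : nat) (x : input n) (k : nat) : bool :=
  oapp x false (insub k : option 'I_n).

Definition leaf_alive (d : nat) (x : input (bt_n d)) (l : 'I_(2 ^ d)) : bool :=
  [forall j : 'I_d, xat x (bt_edge d l j.+1)].

Definition binary_tree_fun (d : nat) (x : input (bt_n d)) : bool :=
  [exists l : 'I_(2 ^ d), leaf_alive x l].

From HB Require Import structures.
From mathcomp Require Import all_boot all_order all_algebra.
From mathcomp Require Import classical_sets reals.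
From mathcomp Require Import zify ring lra.
Import Order.TTheory GRing.Theory Num.Theory.
Set Implicit Arguments. Unset Strict Implicit. Unset Printing Implicit Defensive.

(** The strategy evaluating the subtree of height
    k below node v tests the left edge, recursively evaluates the left
    subtree if that edge is 1, and only if no alive leaf was found does the
    same on the right.  The number of tests is bounded by C with
    C(k+1) = 2 + x_l C_l(k) + x_r C_r(k), where C_l, C_r do not read the
    edges x_l, x_r; independence then gives E[C(k+1)] <= 2 + 2q E[C(k)],
    i.e. E[C(d)] <= 2 sum_(i<d) (2q)^i.  With
    2q = 1 + eps this bounds OPT_A by 2 sum_(i<d) (1+eps)^i, which is even
    slightly stronger than the claim. *)

Section Strategies.
Variable n : nat.

Definition evaluates (A : strategy n -> strategy n -> strategy n)
    (g : input n -> bool) (c : input n -> nat) : Prop :=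
  forall (Tt Tf : strategy n) (x : input n), exists S : seq 'I_n,
    [/\ tested (A Tt Tf) x = S ++ tested (if g x then Tt else Tf) x,
        (size S <= c x)%N &
        forall y : input n, (forall i, i \in S -> y i = x i) -> g y = g x].

Definition test_at (k : nat) (Tt Tf : strategy n) : strategy n :=
  if (insub k : option 'I_n) is Some i then Test i Tf Tt else Tf.

Definition and_strat (A B : strategy n -> strategy n -> strategy n)
    (Tt Tf : strategy n) : strategy n :=
  A (B Tt Tf) Tf.

Definition or_strat (A B : strategy n -> strategy n -> strategy n)
    (Tt Tf : strategy n) : strategy n :=
  A Tt (B Tt Tf).

Lemma test_atP (k : nat) :
  evaluates (test_at k) (fun x => xat x k) (fun _ => 1%N).
Proof.
move=> Tt Tf x; rewrite /test_at /xat; case: insubP => [i _ _|_] /=.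
  by exists [:: i]; split => // y agree; rewrite agree ?mem_head.
by exists [::].
Qed.

Lemma and_stratP A B gA gB cA cB :
  evaluates A gA cA -> evaluates B gB cB ->
  evaluates (and_strat A B) (fun x => gA x && gB x)
            (fun x => cA x + gA x * cB x)%N.
Proof.
move=> hA hB Tt Tf x /=; have [SA [-> szA detA]] := hA (B Tt Tf) Tf x.
case gAx: (gA x) => /=; last first.
  by exists SA; split => [||y /detA ->]; rewrite ?gAx //; lia.
have [SB [-> szB detB]] := hB Tt Tf x.
exists (SA ++ SB); split; rewrite ?catA ?size_cat //; first lia.
move=> y agree; rewrite detA ?gAx ?detB // => i iS; apply: agree;
by rewrite mem_cat iS ?orbT.
Qed.

Lemma or_stratP A B gA gB cA cB :
  evaluates A gA cA -> evaluates B gB cB ->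
  evaluates (or_strat A B) (fun x => gA x || gB x) (fun x => cA x + cB x)%N.
Proof.
move=> hA hB Tt Tf x /=; have [SA [-> szA detA]] := hA Tt (B Tt Tf) x.
case gAx: (gA x) => /=.
  by exists SA; split => [||y /detA ->]; rewrite ?gAx //; lia.
have [SB [-> szB detB]] := hB Tt Tf x.
exists (SA ++ SB); split; rewrite ?catA ?size_cat //; first lia.
move=> y agree; rewrite detA ?gAx ?detB // => i iS; apply: agree;
by rewrite mem_cat iS ?orbT.
Qed.

Fixpoint subtree_alive (v k : nat) (x : input n) : bool :=
  if k is k'.+1 then
    (xat x (2 * v).-2 && subtree_alive (2 * v) k' x)
    || (xat x (2 * v).+1.-2 && subtree_alive (2 * v).+1 k' x)
  else true.

Fixpoint eval_subtree (v k : nat) : strategy n -> strategy n -> strategy n :=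
  if k is k'.+1 then
    or_strat (and_strat (test_at (2 * v).-2) (eval_subtree (2 * v) k'))
             (and_strat (test_at (2 * v).+1.-2) (eval_subtree (2 * v).+1 k'))
  else fun Tt _ => Tt.

(** Bound on its number of tests: a subtree is charged whenever its
    entering edge is 1, whether or not it is actually explored. *)
Fixpoint eval_cost (v k : nat) (x : input n) : nat :=
  if k is k'.+1 then
    (1 + xat x (2 * v).-2 * eval_cost (2 * v) k' x)
    + (1 + xat x (2 * v).+1.-2 * eval_cost (2 * v).+1 k' x)
  else 0.

Lemma eval_subtreeP (k v : nat) :
  evaluates (eval_subtree v k) (subtree_alive v k) (eval_cost v k).
Proof.
elim: k v => [|k IH] v; first by move=> Tt Tf x; exists [::].
by apply: or_stratP; apply: and_stratP; [exact: test_atP | exact: IH |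
  exact: test_atP | exact: IH].
Qed.

Lemma xat_agree (x y : input n) (m : nat) :
  (forall i : 'I_n, val i = m -> y i = x i) -> xat y m = xat x m.
Proof.
by rewrite /xat; case: insubP => [i _ val_i agree|] //=; rewrite agree.
Qed.

(** The cost of the subtree below w only reads edges below w, whose
    indices are at least (2w) - 2. *)
Lemma eval_cost_local (k w : nat) (x y : input n) :
  (forall i : 'I_n, ((2 * w).-2 <= val i)%N -> y i = x i) ->
  eval_cost w k y = eval_cost w k x.
Proof.
elim: k w => [|k IH] w agree //=.
rewrite (@xat_agree x y (2 * w).-2) => [|i val_i]; last by apply: agree; lia.
rewrite (@xat_agree x y (2 * w).+1.-2) => [|i val_i]; last by apply: agree; lia.
by rewrite !IH // => i le_i; apply: agree; lia.
Qed.

End Strategies.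

(** Leaf l (l < 2^k) of the height-k subtree below v is node v 2^k + l; its
    ancestor at depth j+1 below v is (v 2^k + l) / 2^(k-j-1). *)
Definition path_alive (n : nat) (x : input n) (v k l : nat) : bool :=
  [forall j : 'I_k, xat x ((v * 2 ^ k + l) %/ 2 ^ (k - j.+1) - 2)].

Lemma path_alive_cons n (x : input n) (v k b l : nat) :
  (l < 2 ^ k)%N ->
  path_alive x v k.+1 (b * 2 ^ k + l)
  = xat x (2 * v + b).-2 && path_alive x (2 * v + b) k l.
Proof.
move=> lt_l; have node : (v * 2 ^ k.+1 + (b * 2 ^ k + l)
                            = (2 * v + b) * 2 ^ k + l)%N.
  by rewrite expnS; ring.
have top : (((2 * v + b) * 2 ^ k + l) %/ 2 ^ k = 2 * v + b)%N.
  by rewrite divnMDl ?expn_gt0 // divn_small // addn0.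
rewrite /path_alive node; apply/forallP/andP => [alive | [edge /forallP alive]].
  split; first by have := alive ord0; rewrite subSS subn0 top subn2.
  by apply/forallP => j; have := alive (lift ord0 j).
case=> [[|j] lt_j]; first by rewrite subSS subn0 top subn2.
exact: (alive (Ordinal (lt_j : (j < k)%N))).
Qed.

(** The recursive notion agrees with the leaf-path one; the induction splits
    a leaf index l < 2^(k+1) into its top bit and the rest. *)
Lemma subtree_alive_leaves n (x : input n) (k v : nat) :
  subtree_alive v k x = [exists l : 'I_(2 ^ k), path_alive x v k l].
Proof.
elim: k v => [|k IH] v.
  by apply/esym/existsP; exists ord0; apply/forallP => -[].
have child b :
    xat x (2 * v + b).-2 && subtree_alive (2 * v + b) k x
    = [exists l : 'I_(2 ^ k), path_alive x v k.+1 (b * 2 ^ k + l)].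
  rewrite IH; apply/andP/existsP => [[edge /existsP [l alive]]|].
    by exists l; rewrite path_alive_cons // edge.
  by case=> l; rewrite path_alive_cons // => /andP [-> alive]; split => //;
    apply/existsP; exists l.
have via_l := child 0%N; have via_r := child 1%N.
rewrite addn0 in via_l; rewrite addn1 in via_r; rewrite /= via_l via_r.
apply/orP/existsP => [[] /existsP [l alive] | [l alive]].
- have lt_l : (0 * 2 ^ k + l < 2 ^ k.+1)%N.
    by have := ltn_ord l; rewrite expnS; lia.
  by exists (Ordinal lt_l).
- have lt_l : (1 * 2 ^ k + l < 2 ^ k.+1)%N.
    by have := ltn_ord l; rewrite expnS; lia.
  by exists (Ordinal lt_l).
- have lt_b : (l %/ 2 ^ k < 2)%N by rewrite ltn_divLR ?expn_gt0 // -expnS.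
  have lt_r : (l %% 2 ^ k < 2 ^ k)%N by rewrite ltn_mod expn_gt0.
  move: alive; rewrite (divn_eq l (2 ^ k)).
  by case: (l %/ 2 ^ k) lt_b => [|[|]] // _ alive; [left|right];
    apply/existsP; exists (Ordinal lt_r).
Qed.

Lemma binary_tree_fun_subtree (d : nat) (x : input (bt_n d)) :
  binary_tree_fun x = subtree_alive 1 d x.
Proof.
rewrite subtree_alive_leaves; apply: eq_existsb => l; apply: eq_forallb => j.
by rewrite /bt_edge mul1n.
Qed.

Local Open Scope ring_scope.

Section Expectation.
Variables (R : realType) (n : nat) (p : 'I_n -> R).

Definition expect (g : input n -> R) : R :=
  \sum_(x : input n) prob_input p x * g x.

Lemma sum_prob_input : \sum_(x : input n) prob_input p x = 1.
Proof.
rewrite /prob_input -(bigA_distr_bigA (fun i (b : bool) =>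
  if b then p i else 1 - p i)).
by rewrite big1 // => i _; rewrite big_bool /=; ring.
Qed.

Lemma prob_input_ge0 (x : input n) :
  (forall i, 0 <= p i <= 1) -> 0 <= prob_input p x.
Proof.
move=> p01; apply: prodr_ge0 => i _.
by have /andP [? ?] := p01 i; case: (x i); lra.
Qed.

Lemma expect_ge0 (g : input n -> R) :
  (forall i, 0 <= p i <= 1) -> (forall x, 0 <= g x) -> 0 <= expect g.
Proof.
by move=> p01 g0; apply: sumr_ge0 => x _; rewrite mulr_ge0 ?prob_input_ge0.
Qed.

(** Negating coordinate i; this involution pairs the inputs with x_i = 1
    with those with x_i = 0. *)
Definition flip (i : 'I_n) (x : input n) : input n :=
  [ffun j => if j == i then ~~ x j else x j].

Lemma flipK (i : 'I_n) : involutive (flip i).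
Proof.
move=> x; apply/ffunP => j; rewrite !ffunE.
by case: eqP => // ->; rewrite negbK.
Qed.

Lemma expect_indep (i : 'I_n) (g : input n -> R) :
  (forall x, g (flip i x) = g x) ->
  expect (fun x => (x i)%:R * g x) = p i * expect g.
Proof.
move=> g_flip.
pose Q (x : input n) := \prod_(j < n | j != i) (if x j then p j else 1 - p j).
have split_i x : prob_input p x = (if x i then p i else 1 - p i) * Q x.
  by rewrite /prob_input (bigD1 i).
have Q_flip x : Q (flip i x) = Q x.
  by apply: eq_bigr => j ji; rewrite ffunE (negbTE ji).
pose h x := Q x * g x.
have sym : \sum_(x : input n) (x i)%:R * h x
           = \sum_(x : input n) (~~ x i)%:R * h x.
  rewrite (reindex_inj (inv_inj (flipK i))) /=.
  by apply: eq_bigr => x _; rewrite /h Q_flip g_flip ffunE eqxx.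
have -> : expect (fun x => (x i)%:R * g x)
          = p i * \sum_(x : input n) (x i)%:R * h x.
  rewrite big_distrr; apply: eq_bigr => x _.
  by rewrite split_i /h; case: (x i) => /=; ring.
have -> : expect g = \sum_(x : input n)
    (p i * ((x i)%:R * h x) + (1 - p i) * ((~~ x i)%:R * h x)).
  by apply: eq_bigr => x _; rewrite split_i /h; case: (x i) => /=; ring.
by rewrite big_split /= -!big_distrr /= -sym; congr (_ * _); ring.
Qed.

End Expectation.

(** The same for the variable of (possibly out-of-range) index m under a
    uniform bias q; out of range, [xat] is false and the bound is trivial. *)
Lemma expect_xat (R : realType) n (q : R) (m : nat) (g : input n -> R) :
  0 <= q <= 1 -> (forall x, 0 <= g x) ->
  (forall x y : input n, (forall i : 'I_n, val i != m -> y i = x i) ->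
     g y = g x) ->
  expect (fun _ => q) (fun x => (xat x m)%:R * g x)
  <= q * expect (fun _ => q) g.
Proof.
move=> q01 g0 g_local; rewrite /xat; case: insubP => [i _ val_i|_] /=.
  rewrite expect_indep // => x; apply: g_local => j ji; rewrite ffunE.
  by case: eqP => // ji'; rewrite ji' val_i eqxx in ji.
rewrite /expect big1 => [|x _]; last by rewrite mul0r mulr0.
have [q0 _] := andP q01.
by apply: mulr_ge0 => //; apply: expect_ge0.
Qed.

Lemma expect_eval_cost (R : realType) (q : R) n (k v : nat) :
  0 <= q <= 1 -> (1 <= v)%N ->
  expect (fun _ => q) (fun x : input n => (eval_cost v k x)%:R)
  <= 2 * \sum_(i < k) (2 * q) ^+ i.
Proof.
move=> q01; have [q0 _] := andP q01.
elim: k v => [|k IH] v v_gt0.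
  by rewrite big_ord0 mulr0 /expect big1 // => x _; rewrite mulr0.
have child w m : (1 <= w)%N -> (m < (2 * w).-2)%N ->
    expect (fun _ => q)
           (fun x : input n => (xat x m)%:R * (eval_cost w k x)%:R)
    <= q * (2 * \sum_(i < k) (2 * q) ^+ i).
  move=> w_gt0 lt_m; apply: le_trans (ler_wpM2l q0 (IH w w_gt0)).
  apply: expect_xat => // x y agree; congr (_%:R).
  by apply: eval_cost_local => i le_i; apply: agree; lia.
have -> : expect (fun _ => q) (fun x : input n => (eval_cost v k.+1 x)%:R)
    = 2 + expect (fun _ => q) (fun x : input n => (xat x (2 * v).-2)%:R
                                        * (eval_cost (2 * v) k x)%:R)
        + expect (fun _ => q) (fun x : input n => (xat x (2 * v).+1.-2)%:R
                                        * (eval_cost (2 * v).+1 k x)%:R).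
  have two : 2 = expect (fun _ => q) (fun _ : input n => 2).
    by rewrite /expect -big_distrl /= sum_prob_input; ring.
  rewrite [2 in RHS]two /expect -!big_split; apply: eq_bigr => x _.
  by rewrite /= !natrD !natrM; ring.
apply: le_trans.
  by apply: lerD; first apply: lerD (lexx 2) _; apply: child; lia.
set S := \sum_(i < k) _.
have -> : \sum_(i < k.+1) (2 * q) ^+ i = 1 + 2 * q * S.
  rewrite big_ord_recl expr0 big_distrr; congr (_ + _).
  by apply: eq_bigr => i _; rewrite lift0 exprS.
lra.
Qed.

(** OPT_A is at most the expected cost of any valid strategy (the costs
    being nonnegative, the set of expected costs is bounded below by 0). *)
Lemma OPT_A_le_cost (R : realType) n (f : input n -> bool) (c p : 'I_n -> R)
    (T : strategy n) :
  (forall i, 0 <= c i) -> (forall i, 0 <= p i <= 1) -> valid_strategy f T ->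
  OPT_A f c p <= expected_cost c p T.
Proof.
move=> c0 p01 valid_T; apply: ge_inf; last by exists T.
exists 0 => _ [T' _ ->]; apply: expect_ge0 => // x.
exact: sumr_ge0.
Qed.

Lemma eval_tree_valid (d : nat) :
  valid_strategy (@binary_tree_fun d) (eval_subtree 1 d Stop Stop).
Proof.
move=> x y agree; have [S [tested_S _ det_S]] := eval_subtreeP d 1 Stop Stop x.
rewrite !binary_tree_fun_subtree; apply: det_S => i Si; apply: agree.
by rewrite tested_S mem_cat Si.
Qed.

Lemma eval_tree_cost (R : realType) (d : nat) (p : 'I_(bt_n d) -> R) :
  (forall i, 0 <= p i <= 1) ->
  expected_cost (fun _ => 1) p (eval_subtree 1 d Stop Stop)
  <= expect p (fun x => (eval_cost 1 d x)%:R).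
Proof.
move=> p01; apply: ler_sum => x _; rewrite ler_wpM2l ?prob_input_ge0 //.
have [S [tested_S size_S _]] := eval_subtreeP d 1 Stop Stop x.
rewrite tested_S if_same cats0 (_ : \sum_(i <- S) 1 = (size S)%:R) ?ler_nat //.
by rewrite -sum1_size natr_sum.
Qed.

Theorem mainTheorem12 (R : realType) (eps : R) (d : nat) :
  0 < eps < 1 -> (1 <= d)%N ->
  OPT_A (@binary_tree_fun d) (fun _ => 1) (fun _ => (1 + eps) / 2)
    <= 2 * \sum_(i < d.+1) (1 + eps) ^+ i.
Proof.
move=> /andP [eps_gt0 eps_lt1] _; set q := (1 + eps) / 2.
have q01 : 0 <= q <= 1 by apply/andP; split; rewrite /q; lra.
have two_q : 2 * q = 1 + eps by rewrite /q; field.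
apply: le_trans (OPT_A_le_cost _ _ (@eval_tree_valid d)) _ => //.
apply: le_trans (eval_tree_cost _) _ => //.
apply: le_trans (expect_eval_cost _ _ q01 (leqnn 1)) _.
rewrite two_q big_ord_recr /= ler_wpM2l // lerDl exprn_ge0 //; lra.
Qed.
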